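(* Let $A$ be a nonempty finite set of positive integers, let $n$ be a positive integer, and let $\alpha,\beta$ be positive integers with $\alpha\le\beta\le|A|$. Then: (a) If $\binom{|A|}{\alpha}=\sum_{d=1}^{\sup A}\mu(d)\binom{v(A,d)}{\alpha}$, then $\binom{|A|}{\beta}=\sum_{d=1}^{\sup A}\mu(d)\binom{v(A,d)}{\beta}$. (b) If $\binom{|A|}{\alpha}=\sum_{d\mid n}\mu(d)\binom{v(A,d)}{\alpha}$, then $\binom{|A|}{\beta}=\sum_{d\mid n}\mu(d)\binom{v(A,d)}{\beta}$. (c) If $\sum_{d=1}^{\sup A}\mu(d)\binom{v(A,d)}{\beta}=0$, then $\sum_{d=1}^{\sup A}\mu(d)\binom{v(A,d)}{\alpha}=0$. (d) If $\sum_{d\mid n}\mu(d)\binom{v(A,d)}{\beta}=0$, then $\sum_{d\mid n}\mu(d)\binom{v(A,d)}{\alpha}=0$.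
   Context: $\sup A$ is the largest element of $A$. $\mu$ is the Möbius function. For a positive integer $d$, $v(A,d)$ is the number of multiples of $d$ in $A$. Binomial coefficients $\binom{m}{k}$ are $0$ when $k>m$. *)

From mathcomp Require Import all_boot all_order all_algebra.
Set Implicit Arguments. Unset Strict Implicit. Unset Printing Implicit Defensive.
Import GRing.Theory Num.Theory.
Local Open Scope ring_scope.

Definition mobius (n : nat) : int :=
  if (n == 0)%N then 0
  else if all (fun p => (logn p n <= 1)%N) (primes n)
       then (-1) ^+ size (primes n) else 0.

(* A finite set of naturals is represented by a duplicate-free sequence. *)
Definition supA (A : seq nat) : nat := \max_(a <- A) a.

Definition v (A : seq nat) (d : nat) : nat := count (fun a => (d %| a)%N) A.

Definition S_sup (A : seq nat) (k : nat) : int :=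
  \sum_(1 <= d < (supA A).+1) mobius d * ('C(v A d, k))%:Z.

Definition S_div (A : seq nat) (n k : nat) : int :=
  \sum_(d <- divisors n) mobius d * ('C(v A d, k))%:Z.

From mathcomp Require Import all_boot all_order all_algebra.

(* Counting the k-sets of positions of A all of whose entries are divisible by
   d gives 'C(v(A,d), k); with sum_(d | m) mu(d) = [m = 1] both Möbius sums
   therefore count the k-subsets of A whose gcd is coprime to c, where c = 0
   for the sum up to sup A and c = n for the sum over divisors of n.  Being
   coprime to c passes to supersets, so if all alpha-subsets have the property
   then so do all beta-subsets (each contains an alpha-subset), and if some
   alpha-subset has it then so does each of its beta-supersets. *)

Set Implicit Arguments. Unset Strict Implicit. Unset Printing Implicit Defensive.
Import GRing.Theory Num.Theory.
Local Open Scope ring_scope.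

Lemma mobius_eq0 p d : prime p -> (0 < d)%N -> (p ^ 2 %| d)%N -> mobius d = 0.
Proof.
move=> p_pr d_gt0 p2d; rewrite /mobius (negbTE (lt0n_neq0 d_gt0)).
have logp_ge2 : (2 <= logn p d)%N by rewrite -pfactor_dvdn.
have p_d : p \in primes d by rewrite -logn_gt0 (leq_trans _ logp_ge2).
by case: allP => // /(_ p p_d); rewrite leqNgt logp_ge2.
Qed.

Lemma mobius_mul_prime p e : prime p -> (0 < e)%N -> ~~ (p %| e)%N ->
  mobius (p * e) = - mobius e.
Proof.
move=> p_pr e_gt0 p_ne; have p_gt0 := prime_gt0 p_pr.
have primes_pe : perm_eq (primes (p * e)) (p :: primes e).
  apply: uniq_perm; first exact: primes_uniq.
    by rewrite /= primes_uniq andbT mem_primes (negbTE p_ne) !andbF.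
  by move=> q; rewrite primesM // (primes_prime p_pr) in_cons inE orbF.
have logn_pe q : logn q (p * e) = ((q == p) + logn q e)%N.
  by rewrite lognM // logn_prime.
rewrite /mobius muln_eq0 (negbTE (lt0n_neq0 e_gt0)) (negbTE (lt0n_neq0 p_gt0)).
rewrite (perm_all _ primes_pe) (perm_size primes_pe) /= logn_pe eqxx.
rewrite logn_coprime ?prime_coprime //=.
have -> : all (fun q => (logn q (p * e) <= 1)%N) (primes e) =
          all (fun q => (logn q e <= 1)%N) (primes e).
  apply: eq_in_all => q; rewrite mem_primes logn_pe => /and3P[_ _ q_e].
  by case: eqP => [q_p|//]; rewrite -q_p q_e in p_ne.
by case: all; rewrite ?oppr0 // exprS mulN1r.
Qed.

Lemma perm_divisors_mul_prime p e : prime p -> (0 < e)%N ->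
  perm_eq [seq d <- divisors (p * e) | (p %| d)%N] (map (muln p) (divisors e)).
Proof.
move=> p_pr e_gt0; have p_gt0 := prime_gt0 p_pr.
have pe_gt0 : (0 < p * e)%N by rewrite muln_gt0 p_gt0.
have mulp_inj : injective (muln p).
  by move=> x y /eqP; rewrite eqn_pmul2l // => /eqP.
apply: uniq_perm; first exact: filter_uniq (divisors_uniq _).
  by rewrite (map_inj_uniq mulp_inj) divisors_uniq.
move=> d; rewrite mem_filter -dvdn_divisors //.
case/boolP: (p %| d)%N => [/dvdnP[d' ->] | p_nd] /=.
  by rewrite mulnC (mem_map mulp_inj) -dvdn_divisors // dvdn_pmul2l.
by apply/esym/mapP => -[d' _ d_eq]; rewrite d_eq dvdn_mulr in p_nd.
Qed.

Lemma perm_divisors_coprime_prime p e : prime p -> (0 < e)%N ->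
  perm_eq [seq d <- divisors (p * e) | ~~ (p %| d)%N]
          [seq d <- divisors e | ~~ (p %| d)%N].
Proof.
move=> p_pr e_gt0; have pe_gt0 : (0 < p * e)%N by rewrite muln_gt0 prime_gt0.
apply: uniq_perm; try exact: filter_uniq (divisors_uniq _).
move=> d; rewrite !mem_filter -!dvdn_divisors //.
by case/boolP: (p %| d)%N => //= p_nd; rewrite Gauss_dvdr // coprime_sym prime_coprime.
Qed.

Lemma sum_mobius_divisors m : (0 < m)%N ->
  \sum_(d <- divisors m) mobius d = (m == 1)%:R.
Proof.
move=> m_gt0; have [m_le1|m_gt1] := leqP m 1.
  have -> : m = 1%N by apply/eqP; rewrite eqn_leq m_le1.
  by rewrite big_seq1.
set p := pdiv m; have p_pr : prime p by exact: pdiv_prime.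
have [e m_eq] : exists e, m = (p * e)%N by exists (m %/ p)%N; rewrite mulnC divnK ?pdiv_dvd.
have e_gt0 : (0 < e)%N by move: m_gt0; rewrite m_eq muln_gt0 => /andP[].
set S' := \sum_(d <- divisors e | ~~ (p %| d)%N) mobius d.
have sum_mul_p : \sum_(d <- divisors e) mobius (p * d) = - S'.
  rewrite (bigID (fun d => p %| d)%N) /= big1_seq ?add0r; last first.
    move=> d /andP[p_d]; rewrite -dvdn_divisors // => d_e.
    apply: (mobius_eq0 p_pr); first by rewrite muln_gt0 prime_gt0 ?(dvdn_gt0 e_gt0).
    by rewrite dvdn_pmul2l ?prime_gt0.
  rewrite /S' -sumrN big_seq_cond [RHS]big_seq_cond; apply: eq_bigr => d /andP[d_e p_nd].
  by rewrite mobius_mul_prime // (dvdn_gt0 e_gt0) ?dvdn_divisors.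
rewrite gtn_eqF // (bigID (fun d => p %| d)%N) /= m_eq.
rewrite -[X in X + _]big_filter -[X in _ + X]big_filter.
rewrite (perm_big _ (perm_divisors_mul_prime p_pr e_gt0)) big_map sum_mul_p.
by rewrite (perm_big _ (perm_divisors_coprime_prime p_pr e_gt0)) big_filter addNr.
Qed.

Lemma sum_mobius_dvdn (r : seq nat) m : uniq r -> (0 < m)%N ->
  {subset divisors m <= r} ->
  \sum_(d <- r) mobius d * (d %| m)%N%:Z = (m == 1)%:R.
Proof.
move=> r_uniq m_gt0 r_divs; rewrite -sum_mobius_divisors //.
have mobius_dvdn d : mobius d * (d %| m)%N%:Z = if (d %| m)%N then mobius d else 0.
  by case: ifP; rewrite ?mulr1 ?mulr0.
under eq_bigr do rewrite mobius_dvdn.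
rewrite -big_mkcond -big_filter; apply: perm_big; apply: uniq_perm.
- exact: filter_uniq.
- exact: divisors_uniq.
move=> d; rewrite mem_filter -dvdn_divisors //.
by case d_m: (d %| m)%N => //=; apply: r_divs; rewrite -dvdn_divisors.
Qed.

Section UpwardClosedDraws.
Variables (T : finType) (P : pred {set T}).
Hypothesis P_up : forall B C : {set T}, B \subset C -> P B -> P C.

Definition good_draws k := [set B : {set T} | #|B| == k & P B].

Lemma good_draws_full k l : (k <= l)%N ->
  #|good_draws k| = 'C(#|T|, k) -> #|good_draws l| = 'C(#|T|, l).
Proof.
move=> k_le_l card_k.
have good_k : good_draws k = [set B : {set T} | #|B| == k].
  apply/eqP; rewrite eqEcard card_draws card_k leqnn andbT.
  by apply/subsetP => B; rewrite !inE => /andP[].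
rewrite -card_draws; apply: eq_card => C; rewrite !inE.
case/boolP: (#|C| == l) => //= /eqP card_C.
have : (0 < #|[set B : {set T} | B \subset C & #|B| == k]|)%N.
  by rewrite cards_draws bin_gt0 card_C.
case/card_gt0P => B; rewrite inE => /andP[B_C card_B].
have : B \in good_draws k by rewrite good_k inE.
by rewrite inE => /andP[_ /(P_up B_C)].
Qed.

Lemma good_draws_eq0 k l : (k <= l)%N -> (l <= #|T|)%N ->
  #|good_draws l| = 0%N -> #|good_draws k| = 0%N.
Proof.
move=> k_le_l l_le_T /eqP; rewrite !cards_eq0 => /eqP good_l.
apply: eq_card0 => B; rewrite !inE; apply/negbTE/andP => -[/eqP card_B PB].
have : (0 < #|[set D : {set T} | D \subset ~: B & #|D| == (l - k)%N]|)%N.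
  by rewrite cards_draws bin_gt0 (cardsCs (~: B)) setCK card_B leq_sub2r.
case/card_gt0P => D; rewrite inE => /andP[D_Bc /eqP card_D].
have : B :|: D \in good_draws l.
  have BD0 : B :&: D = set0.
    by rewrite setIC disjoint_setI0 // disjoints_subset.
  rewrite inE cardsU BD0 cards0 subn0 card_B card_D subnKC //.
  by rewrite eqxx (P_up (subsetUl B D) PB).
by rewrite good_l inE.
Qed.

End UpwardClosedDraws.

Section SubsetGcd.
Variable A : seq nat.
Local Notation N := (size A).

Definition gcd_sub (B : {set 'I_N}) : nat := \big[gcdn/0%N]_(i in B) nth 0%N A i.

Lemma dvdn_gcd_sub d (B : {set 'I_N}) :
  (d %| gcd_sub B)%N = (B \subset [set i : 'I_N | d %| nth 0%N A i]%N).
Proof. by apply/dvdn_biggcdP/subsetP => dvd_B i /dvd_B; rewrite ?inE. Qed.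

Lemma gcd_sub_dvdn (B : {set 'I_N}) i : i \in B -> (gcd_sub B %| nth 0%N A i)%N.
Proof.
by move=> iB; have := dvdnn (gcd_sub B); rewrite dvdn_gcd_sub => /subsetP/(_ i iB); rewrite inE.
Qed.

Lemma gcd_sub_subset (B C : {set 'I_N}) : B \subset C -> (gcd_sub C %| gcd_sub B)%N.
Proof.
by move=> B_C; rewrite dvdn_gcd_sub; apply: subset_trans B_C _; rewrite -dvdn_gcd_sub.
Qed.

Lemma binom_v d k :
  'C(v A d, k) = (\sum_(B : {set 'I_N} | #|B| == k) (d %| gcd_sub B))%N.
Proof.
have -> : v A d = #|[set i : 'I_N | d %| nth 0%N A i]%N|.
  rewrite /v -sum1_count (big_nth 0%N) big_mkord sum1_card.
  by apply: eq_card => i; rewrite inE.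
rewrite -cards_draws -sum1_card.
rewrite [RHS](eq_bigr (fun B => if d %| gcd_sub B then 1 else 0)%N); last by move=> B _; case: ifP.
rewrite -big_mkcondr /=.
by apply: eq_bigl => B; rewrite !inE andbC dvdn_gcd_sub.
Qed.

Lemma sum_mobius_binom_v (r : seq nat) c k : uniq r -> {in r, forall d, d %| c}%N ->
  (forall B : {set 'I_N}, #|B| == k ->
     (0 < gcdn c (gcd_sub B))%N /\ {subset divisors (gcdn c (gcd_sub B)) <= r}) ->
  \sum_(d <- r) mobius d * ('C(v A d, k))%:Z
    = (#|good_draws (fun B => coprime c (gcd_sub B)) k|)%:Z.
Proof.
move=> r_uniq r_dvd_c r_covers.
have PoszE (I : Type) (s : seq I) (Q : pred I) (F : I -> nat) :
    (\sum_(i <- s | Q i) F i)%N%:Z = \sum_(i <- s | Q i) (F i)%:Z.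
  exact: big_morph.
under eq_bigr do rewrite binom_v PoszE mulr_sumr.
rewrite exchange_big /= -sum1_card PoszE.
rewrite [RHS](eq_bigl (fun B : {set 'I_N} => (#|B| == k) && coprime c (gcd_sub B))); last first.
  by move=> B; rewrite inE.
rewrite big_mkcondr /=; apply: eq_bigr => B /r_covers[gcd_gt0 divs_r].
rewrite -mulrb /coprime -(sum_mobius_dvdn r_uniq gcd_gt0 divs_r).
by apply: eq_big_seq => d /r_dvd_c d_c; rewrite dvdn_gcd d_c.
Qed.

End SubsetGcd.

Arguments gcd_sub : clear implicits.

Lemma coprime_gcd_sub_subset (A : seq nat) c (B C : {set 'I_(size A)}) :
  B \subset C -> coprime c (gcd_sub A B) -> coprime c (gcd_sub A C).
Proof. by move/gcd_sub_subset; apply: coprime_dvdr. Qed.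

Lemma S_sup_good_draws A k : all (fun a => 0 < a)%N A -> (0 < k)%N ->
  S_sup A k = (#|good_draws (fun B => coprime 0 (gcd_sub A B)) k|)%:Z.
Proof.
(* k > 0 keeps B nonempty, so its gcd (0 for the empty family) is positive
   and at most sup A. *)
move=> A_pos k_gt0; apply: sum_mobius_binom_v => [|d _|B /eqP card_B].
- exact: iota_uniq.
- exact: dvdn0.
have /set0Pn[i iB] : B != set0 by rewrite -card_gt0 card_B.
have a_gt0 : (0 < nth 0 A i)%N by apply: (all_nthP 0%N A_pos).
have g_a := gcd_sub_dvdn iB; have g_gt0 := dvdn_gt0 a_gt0 g_a.
rewrite gcd0n; split=> // d; rewrite -dvdn_divisors // mem_index_iota => d_g.
rewrite (dvdn_gt0 g_gt0 d_g) ltnS (leq_trans (dvdn_leq g_gt0 d_g)) //.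
rewrite (leq_trans (dvdn_leq a_gt0 g_a)) //.
by apply: leq_bigmax_seq; rewrite ?mem_nth.
Qed.

Lemma S_div_good_draws A n k : (0 < n)%N ->
  S_div A n k = (#|good_draws (fun B => coprime n (gcd_sub A B)) k|)%:Z.
Proof.
move=> n_gt0; have gcd_gt0 m : (0 < gcdn n m)%N by rewrite gcdn_gt0 n_gt0.
apply: sum_mobius_binom_v => [|d|B _]; first exact: divisors_uniq.
  by rewrite -dvdn_divisors.
split=> // d; rewrite -!dvdn_divisors // => /dvdn_trans; apply; exact: dvdn_gcdl.
Qed.

Theorem corollary5p3 (A : seq nat) (n alpha beta : nat) :
  uniq A -> A != [::] -> all (fun a => (0 < a)%N) A ->
  (0 < n)%N -> (0 < alpha)%N -> (alpha <= beta)%N -> (beta <= size A)%N ->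
  [/\ ('C(size A, alpha))%:Z = S_sup A alpha -> ('C(size A, beta))%:Z = S_sup A beta,
      ('C(size A, alpha))%:Z = S_div A n alpha -> ('C(size A, beta))%:Z = S_div A n beta,
      S_sup A beta = 0 -> S_sup A alpha = 0
    & S_div A n beta = 0 -> S_div A n alpha = 0].
Proof.
move=> _ _ A_pos n_gt0 alpha_gt0 alpha_le_beta beta_le_N.
have beta_gt0 := leq_trans alpha_gt0 alpha_le_beta.
have up c := @coprime_gcd_sub_subset A c.
rewrite !S_sup_good_draws // !S_div_good_draws //.
split=> -[good_alpha]; congr Posz.
- by rewrite (good_draws_full (up 0%N) alpha_le_beta) card_ord.
- by rewrite (good_draws_full (up n) alpha_le_beta) card_ord.
- by apply: (good_draws_eq0 (up 0%N) alpha_le_beta); rewrite ?card_ord.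
- by apply: (good_draws_eq0 (up n) alpha_le_beta); rewrite ?card_ord.
Qed.
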